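(* Every perfect binary tree is odd prime.
   Context: All graphs are finite and simple. A graph $G$ of order $N$ is odd prime if there is a bijection $\ell:V(G)\to\{1,3,\ldots,2N-1\}$ with $\gcd(\ell(u),\ell(v))=1$ for every edge $uv$. A perfect binary tree with $n\ge 1$ levels is a rooted tree in which every non-leaf vertex has exactly two children and all leaves lie on the same level; level $i$ has $2^{i-1}$ vertices, $1\le i\le n$. *)

From mathcomp Require Import all_boot.
Set Implicit Arguments. Unset Strict Implicit. Unset Printing Implicit Defensive.

(* A finite simple graph on vertex set T is given by a symmetric,
   irreflexive relation e : rel T.  Order N = #|T|. *)

(* Odd prime labeling: a bijection l from V(G) onto {1,3,...,2N-1}
   (stated as: l injective, and its image is exactly the set of odd
   numbers < 2N) such that adjacent vertices get coprime labels. *)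
Definition odd_prime (T : finType) (e : rel T) : Prop :=
  exists l : T -> nat,
    injective l /\
    (forall k, (odd k && (k < 2 * #|T|)) <-> (exists v, l v = k)) /\
    (forall u v, e u v -> coprime (l u) (l v)).

(* Perfect binary tree with n levels, vertices 0 .. 2^n - 2 in heap
   (level-order) numbering: vertex i has children 2i+1 and 2i+2 (when
   these are < 2^n - 1); vertex 0 is the root, level k (1-based) consists
   of vertices 2^(k-1)-1 .. 2^k - 2, i.e. 2^(k-1) vertices. *)
Definition pbt_vertex (n : nat) := 'I_(2 ^ n - 1).

Definition pbt_edge (n : nat) : rel (pbt_vertex n) :=
  fun i j => [|| val j == (val i).*2.+1, val j == (val i).*2.+2,
                 val i == (val j).*2.+1 | val i == (val j).*2.+2].

Lemma pbt_edge_sym n : symmetric (@pbt_edge n).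
Proof. by move=> i j; rewrite /pbt_edge; do 4 case: (_ == _). Qed.

From mathcomp Require Import all_boot zify.
Set Implicit Arguments. Unset Strict Implicit. Unset Printing Implicit Defensive.

(* Label the vertices 1, 3, 5, ... in in-order (left subtree, root, right
   subtree).  In a perfect binary tree the in-order positions of a vertex at
   depth d and of its children differ by 2^(n-d-2), so adjacent labels are odd
   numbers differing by a power of 2, hence coprime. *)

Lemma coprime_odd_addX2 a k : odd a -> coprime a (a + 2 ^ k).
Proof. by move=> a_odd; rewrite /coprime gcdnDl -/(coprime _ _) coprimeXr // coprimen2. Qed.

Lemma odd_mulX2_inj a b e f :
  odd a -> odd b -> a * 2 ^ e = b * 2 ^ f -> a = b /\ e = f.
Proof.
have logn2 c k : odd c -> logn 2 (c * 2 ^ k) = k.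
  by move=> c_odd; rewrite logn_Gauss ?coprime2n // pfactorK.
move=> a_odd b_odd eq_ab; have e_f : e = f by rewrite -(logn2 a e) // eq_ab logn2.
by move: eq_ab; rewrite e_f => /eqP; rewrite eqn_pmul2r ?expn_gt0 // => /eqP.
Qed.

Lemma odd_half_inj m p : odd m -> odd p -> m./2 = p./2 -> m = p.
Proof.
move=> m_odd p_odd eq_half.
by rewrite -[m]odd_double_half -[p]odd_double_half m_odd p_odd eq_half.
Qed.

Lemma odd_labels_onto (T : finType) (l : T -> nat) :
  injective l -> (forall v, odd (l v) /\ l v < 2 * #|T|) ->
  forall k, odd k && (k < 2 * #|T|) <-> exists v, l v = k.
Proof.
move=> l_inj l_odd k; split; last by case=> v <-; have [-> ->] := l_odd v.
case/andP=> k_odd k_lt.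
have half_lt m : m < 2 * #|T| -> m./2 < #|T| by rewrite ltn_half_double mul2n.
pose h v : 'I_#|T| := Ordinal (half_lt _ (l_odd v).2).
have h_inj : injective h.
  move=> u v /(congr1 val); rewrite /h /= => eq_half; apply: l_inj.
  by apply: odd_half_inj eq_half; [case: (l_odd u) | case: (l_odd v)].
have /codomP [v /(congr1 val)] := inj_card_onto h_inj
  (eq_leq (card_ord _)) (Ordinal (half_lt _ k_lt)).
rewrite /h /= => eq_half; exists v.
by apply/esym/(odd_half_inj k_odd _ eq_half); case: (l_odd v).
Qed.

(* For the vertex with heap index m = 2^d + x, x < 2^d (the root has index 1,
   the children of m are 2m and 2m+1), i.e. the x-th vertex on level d+1,
   this is its 1-based position in the in-order traversal of the perfect
   binary tree with n levels. *)
Definition inorder_rank (n m : nat) : nat :=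
  (2 * (m - 2 ^ trunc_log 2 m) + 1) * 2 ^ (n.-1 - trunc_log 2 m).

Lemma inorder_rankE n d x :
  x < 2 ^ d -> inorder_rank n (2 ^ d + x) = (2 * x + 1) * 2 ^ (n.-1 - d).
Proof.
move=> x_lt; rewrite /inorder_rank (@trunc_log_eq 2 d) ?addKn //.
by rewrite leq_addr expnS; lia.
Qed.

Lemma heap_index_decomp m : 0 < m -> exists d x, x < 2 ^ d /\ m = 2 ^ d + x.
Proof.
move=> m_gt0; have /andP[lo hi] := trunc_log_bounds (isT : 1 < 2) m_gt0.
by exists (trunc_log 2 m), (m - 2 ^ trunc_log 2 m); move: hi; rewrite expnS; lia.
Qed.

Lemma depth_lt n d x : 2 ^ d + x < 2 ^ n -> d < n.
Proof. by move=> lt_n; rewrite -(ltn_exp2l _ _ (isT : 1 < 2)); lia. Qed.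

Lemma inorder_rank_bounds n m : 0 < m < 2 ^ n -> 0 < inorder_rank n m < 2 ^ n.
Proof.
case/andP=> /heap_index_decomp[d [x [x_lt ->]]] m_lt.
have d_lt := depth_lt m_lt; rewrite inorder_rankE //.
have -> : 2 ^ n = 2 ^ d.+1 * 2 ^ (n.-1 - d) by rewrite -expnD; congr (2 ^ _); lia.
by rewrite ltn_pmul2r ?expn_gt0 // muln_gt0 expn_gt0 expnS; lia.
Qed.

Lemma inorder_rank_inj n : {in [pred m | 0 < m < 2 ^ n] &, injective (inorder_rank n)}.
Proof.
move=> m p /andP[/heap_index_decomp[d [x [x_lt ->]]] m_lt].
move=> /andP[/heap_index_decomp[d' [x' [x'_lt ->]]] p_lt].
have := depth_lt m_lt; have := depth_lt p_lt; rewrite !inorder_rankE //.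
move=> d_lt d'_lt /odd_mulX2_inj[]; rewrite ?addn1 /= ?oddM // => x_eq e_eq.
have d_eq : d = d' by lia.
by rewrite d_eq; lia.
Qed.

Lemma inorder_rank_child n m (b : bool) : 0 < m -> 2 * m + b < 2 ^ n ->
  exists k, inorder_rank n m + 2 ^ k = inorder_rank n (2 * m + b)
         \/ inorder_rank n (2 * m + b) + 2 ^ k = inorder_rank n m.
Proof.
move=> /heap_index_decomp[d [x [x_lt ->]]].
have -> : 2 * (2 ^ d + x) + b = 2 ^ d.+1 + (2 * x + b) by rewrite expnS; lia.
have child_lt : 2 * x + b < 2 ^ d.+1 by rewrite expnS; case: b; lia.
move=> /depth_lt d_lt; rewrite !inorder_rankE //.
have -> : n.-1 - d = (n.-1 - d.+1).+1 by lia.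
exists (n.-1 - d.+1); rewrite expnS.
by case: b {child_lt}; [left | right]; nia.
Qed.

Lemma odd_double_pred r : 0 < r -> odd (2 * r - 1).
Proof. by case: r => // r _; rewrite mulnS add2n subn1 /= oddM. Qed.

Lemma coprime_pow2_apart r s k :
  0 < r -> r + 2 ^ k = s -> coprime (2 * r - 1) (2 * s - 1).
Proof.
move=> r_gt0 <-; have -> : 2 * (r + 2 ^ k) - 1 = 2 * r - 1 + 2 ^ k.+1 by rewrite expnS; lia.
exact/coprime_odd_addX2/odd_double_pred.
Qed.

Section Labeling.

Variable n : nat.

Definition pbt_label (v : pbt_vertex n) : nat := 2 * inorder_rank n (val v).+1 - 1.

Lemma pbt_vertex_lt (v : pbt_vertex n) : (val v).+1 < 2 ^ n.
Proof. by case: v => /= v; lia. Qed.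

Lemma pbt_rank_bounds (v : pbt_vertex n) : 0 < inorder_rank n (val v).+1 < 2 ^ n.
Proof. exact/inorder_rank_bounds/pbt_vertex_lt. Qed.

Lemma pbt_label_inj : injective pbt_label.
Proof.
move=> u v eq_l; apply/val_inj/succn_inj/(@inorder_rank_inj n).
1, 2: by rewrite inE pbt_vertex_lt.
have /andP[ru_gt0 _] := pbt_rank_bounds u; have /andP[rv_gt0 _] := pbt_rank_bounds v.
by move: eq_l; rewrite /pbt_label; lia.
Qed.

Lemma pbt_label_odd_lt (v : pbt_vertex n) :
  odd (pbt_label v) /\ pbt_label v < 2 * #|pbt_vertex n|.
Proof.
have /andP[r_gt0 r_lt] := pbt_rank_bounds v; rewrite card_ord /pbt_label.
by split; [exact: odd_double_pred | lia].
Qed.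

Lemma pbt_label_child (u v : pbt_vertex n) (b : bool) :
  (val v).+1 = 2 * (val u).+1 + b -> coprime (pbt_label u) (pbt_label v).
Proof.
move=> Ev; have v_lt : 2 * (val u).+1 + b < 2 ^ n by rewrite -Ev pbt_vertex_lt.
have [k [Ek | Ek]] := inorder_rank_child (ltn0Sn _) v_lt; rewrite -Ev in Ek.
- by apply: coprime_pow2_apart Ek; case/andP: (pbt_rank_bounds u).
- by rewrite coprime_sym; apply: coprime_pow2_apart Ek; case/andP: (pbt_rank_bounds v).
Qed.

Lemma pbt_label_coprime (u v : pbt_vertex n) :
  pbt_edge u v -> coprime (pbt_label u) (pbt_label v).
Proof.
case/or4P=> /eqP E.
- by apply: (@pbt_label_child u v false); lia.
- by apply: (@pbt_label_child u v true); lia.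
- by rewrite coprime_sym; apply: (@pbt_label_child v u false); lia.
- by rewrite coprime_sym; apply: (@pbt_label_child v u true); lia.
Qed.

End Labeling.

Theorem theorem4p3 (n : nat) : 1 <= n -> odd_prime (@pbt_edge n).
Proof.
move=> _; exists (@pbt_label n); split; first exact: pbt_label_inj.
split; last exact: pbt_label_coprime.
exact: odd_labels_onto (@pbt_label_inj n) (@pbt_label_odd_lt n).
Qed.
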